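(* Let $E$ be a real Banach space, let $x,y\in E$ be linearly independent, let $[m,M]=\{\alpha\in\mathbb{R}:x+\alpha y\perp y\}$, and for $\alpha\in D(x,y)\setminus[m,M]$ let $f(\alpha)$ be the unique real number with $x+\alpha y\perp x-f(\alpha)y$ (so $f$ is defined almost everywhere on $\mathbb{R}\setminus[m,M]$, and $t+f(t)\neq0$ wherever $f(t)$ is defined). Then for every $\alpha>M$, $$\|x+\alpha y\|=\|x+My\|\exp\Big(\int_M^\alpha \frac{dt}{t+f(t)}\Big),$$ and for every $\alpha<m$, $$\|x+\alpha y\|=\|x+my\|\exp\Big(-\int_\alpha^m \frac{dt}{t+f(t)}\Big),$$ where the integrals are Lebesgue integrals.
   Context: For $u,v\in E$, $u\perp v$ means $\|u+\beta v\|\ge\|u\|$ for every $\beta\in\mathbb{R}$ (Birkhoff–James orthogonality). For linearly independent $x,y\in E$, $D(x,y)$ denotes the set of $\alpha\in\mathbb{R}$ at which the convex function $\phi(\alpha)=\|x+\alpha y\|$ is differentiable; its complement has Lebesgue measure zero. The set $\{\alpha: x+\alpha y\perp y\}$ is a closed bounded interval $[m,M]$, and for $\alpha\in D(x,y)\setminus[m,M]$ there is a unique $f(\alpha)\in\mathbb{R}$ with $x+\alpha y\perp x-f(\alpha)y$. *)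

From HB Require Import structures.
From mathcomp Require Import all_boot all_order all_algebra.
From mathcomp Require Import all_classical all_reals all_analysis.
Set Implicit Arguments. Unset Strict Implicit. Unset Printing Implicit Defensive.
Import Order.TTheory GRing.Theory Num.Theory numFieldNormedType.Exports.
Local Open Scope classical_set_scope.
Local Open Scope ring_scope.

Definition bj_orth {R : realType} {E : normedModType R} (u v : E) : Prop :=
  forall b : R, `|u| <= `|u + b *: v|.

Definition Dxy {R : realType} {E : normedModType R} (x y : E) : set R :=
  [set a | derivable (fun t : R => `|x + t *: y|) a 1].

(* f(a) := the unique b with x + a y ⊥ x - b y, for a in D(x,y) \ [m,M];
   set to 0 elsewhere (irrelevant: the complement of D(x,y) is null). *)
Definition fxy {R : realType} {E : normedModType R} (x y : E) (m M : R) (a : R) : R :=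
  if `[< Dxy x y a /\ ~ (m <= a <= M) >]
  then xget 0 [set b : R | bj_orth (x + a *: y) (x - b *: y)]
  else 0.

From HB Require Import structures.
From mathcomp Require Import all_boot all_order all_algebra.
From mathcomp Require Import all_classical all_reals all_analysis.
From mathcomp Require Import ring lra measurable_realfun.
Set Implicit Arguments.
Unset Strict Implicit.
Unset Printing Implicit Defensive.
Import Order.TTheory GRing.Theory Num.Theory numFieldNormedType.Exports.
Local Open Scope classical_set_scope.
Local Open Scope ring_scope.

(* The function phi t := ||x + t y|| is convex, Lipschitz and bounded below by
   a positive constant. Its right derivative phi'_+ is nondecreasing, and
   phi is differentiable outside the countable set where phi'_- < phi'_+.
   At a point t of differentiability which is not a minimiser of phi,
   x + t y is orthogonal to x - b y exactly when phi t / (t + b) is a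
   subgradient of phi at t, so t + f(t) = phi t / phi'(t). Hence
   1 / (t + f(t)) = (ln phi)'(t) almost everywhere off [m, M], and both
   formulas reduce to the fundamental theorem of calculus for ln phi. That is
   proved directly: on [s, t] both the integral of phi'_+ / phi and
   ln phi t - ln phi s differ from (t - s) phi'_+ s / phi s by at most
   (t - s) (B t - B s) for a nondecreasing B, so summing over a subdivision
   of mesh 1/n leaves an error O(1/n). *)

Lemma countableU {T : Type} (A B : set T) :
  countable A -> countable B -> countable (A `|` B).
Proof.
move=> cA cB; have -> : A `|` B = \bigcup_(b in [set: bool]) (if b then A else B).
  apply/seteqP; split=> [u [Au|Bu]|u [[] _ ?]]; [exists true|exists false|left|right] => //.
by apply: bigcup_countable => [|[]]; first exact: countableP.
Qed.

Lemma lipschitz_continuous {R : realType} (f : R -> R) (K : R) :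
  (forall s t, `|f t - f s| <= K * `|t - s|) -> continuous f.
Proof.
move=> f_lip t; apply/cvgrPdist_lt => e e_gt0.
have K1 : 0 < `|K| + 1 by rewrite ltr_wpDl.
exists (e / (`|K| + 1)); first by rewrite /= divr_gt0.
move=> s /= ts; apply: le_lt_trans (f_lip s t) _.
have := ler_wpM2r (normr_ge0 (t - s)) (ler_norm K).
have : `|K| * `|t - s| <= `|K| * (e / (`|K| + 1)) by rewrite ler_wpM2l // ltW.
have : `|K| * (e / (`|K| + 1)) < e by rewrite mulrA ltr_pdivrMr //; nra.
lra.
Qed.

Lemma ln_sub_bounds {R : realType} (a b : R) : 0 < a -> 0 < b ->
  (b - a) / b <= ln b - ln a <= (b - a) / a.
Proof.
have ln_sub_le (u v : R) : 0 < u -> 0 < v -> ln v - ln u <= (v - u) / u.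
  move=> u_gt0 v_gt0.
  have h : -1 < (v - u) / u by rewrite ltrNl -mulNr opprB ltr_pdivrMr //; lra.
  have := le_ln1Dx h.
  have -> : 1 + (v - u) / u = v / u by field; rewrite gt_eqF.
  by rewrite ln_div ?posrE.
move=> a_gt0 b_gt0; rewrite ln_sub_le // andbT.
have := ln_sub_le _ _ b_gt0 a_gt0.
have -> : (a - b) / b = - ((b - a) / b) by rewrite -mulNr opprB.
lra.
Qed.

Lemma dist_div_le {R : realFieldType} (c K r r' f f' e : R) :
  0 < c -> c <= f -> c <= f' -> r <= r' -> `|r| <= K -> `|f' - f| <= K * e ->
  `|r' / f' - r / f| <= (r' - r) / c + K * K * e / (c * c).
Proof.
move=> c_gt0 cf cf' rr' rK ff'.
have f_gt0 : 0 < f by exact: lt_le_trans c_gt0 cf.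
have f'_gt0 : 0 < f' by exact: lt_le_trans c_gt0 cf'.
have -> : r' / f' - r / f = (r' - r) / f' + r * (f - f') / (f * f').
  by field; rewrite ?gt_eqF.
apply: le_trans (ler_normD _ _) _; apply: lerD.
  rewrite normrM ger0_norm ?subr_ge0 // normfV gtr0_norm //.
  by apply: ler_wpM2l; [rewrite subr_ge0|rewrite lef_pV2 ?posrE].
rewrite normrM normfV normrM (gtr0_norm (mulr_gt0 f_gt0 f'_gt0)) distrC -mulrA.
rewrite -[K * K * e]mulrA -mulrA.
apply: ler_pM => //; first by rewrite divr_ge0 // mulr_ge0 // ltW.
apply: ler_pM => //; first by rewrite invr_ge0 mulr_ge0 // ltW.
by rewrite lef_pV2 ?posrE ?mulr_gt0 // ler_pM // ltW.
Qed.

Lemma eq_of_increment_le {R : realType} (D B : R -> R) (p q : R) : p <= q ->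
  (forall s t, p <= s -> s <= t -> t <= q -> B s <= B t) ->
  (forall s t, p <= s -> s < t -> t <= q -> `|D t - D s| <= (t - s) * (B t - B s)) ->
  D q = D p.
Proof.
move=> pq B_mono D_inc; have [->//|neq_pq] := eqVneq p q.
have lt_pq : p < q by rewrite lt_neqAle neq_pq.
(* Telescoping over a regular subdivision of [p, q] into n pieces. *)
have grid_bound n : (0 < n)%N -> `|D q - D p| <= (q - p) / n%:R * (B q - B p).
  move=> n_gt0; set d := (q - p) / n%:R.
  have d_gt0 : 0 < d by rewrite divr_gt0 ?subr_gt0 ?ltr0n.
  have nd : n%:R * d = q - p by rewrite /d mulrC divfK // pnatr_eq0 -lt0n.
  pose x k := p + k%:R * d.
  have x_in k : (k <= n)%N -> p <= x k <= q.
    move=> kn; apply/andP; split; first by rewrite /x lerDl mulr_ge0 // ltW.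
    have : k%:R * d <= n%:R * d by rewrite ler_pM2r // ler_nat.
    by rewrite nd /x; lra.
  suff xk_bound k : (k <= n)%N -> `|D (x k) - D p| <= d * (B (x k) - B p).
    by have := xk_bound n (leqnn n); rewrite /x nd addrCA subrr addr0.
  elim: k => [_|k IH kn]; first by rewrite /x mul0r addr0 !subrr normr0 mulr0.
  have xS : x k.+1 = x k + d by rewrite /x -addn1 natrD mulrDl mul1r addrA.
  have /andP[pxk _] := x_in k (ltnW kn).
  have /andP[_ xSq] := x_in k.+1 kn.
  have xk_lt : x k < x k.+1 by rewrite xS ltrDl.
  have step := D_inc _ _ pxk xk_lt xSq.
  rewrite (_ : x k.+1 - x k = d) in step; last by rewrite xS addrC addKr.
  have := IH (ltnW kn); have := ler_distD (D (x k)) (D (x k.+1)) (D p).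
  rewrite !mulrBr in step *; lra.
set C := (q - p) * (B q - B p).
apply/eqP; rewrite -subr_eq0 -normr_eq0; apply/negPn/negP => ne0.
have e_gt0 : 0 < `|D q - D p| by rewrite lt_def ne0 normr_ge0.
set e := `|D q - D p| in e_gt0 ne0 *.
pose n := (Num.truncn (C / e)).+1.
suff : (q - p) / n%:R * (B q - B p) < e by move=> /(le_lt_trans (grid_bound n isT)); rewrite ltxx.
have n_gt0 : 0 < n%:R :> R by rewrite ltr0n.
rewrite mulrAC -/C ltr_pdivrMr // mulrC -ltr_pdivrMr //.
exact: truncnS_gt.
Qed.

Section IntervalIntegrals.
Context {R : realType}.
Local Notation mu := (@lebesgue_measure R).

Lemma lebesgue_measure_itv_cc (s t : R) : s <= t -> mu [set` `[s, t]] = (t - s)%:E.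
Proof.
move=> st; rewrite lebesgue_measure_itv /= lte_fin.
have [//|ts] := ltP s t.
have -> : t = s by apply/eqP; rewrite eq_le ts st.
by rewrite subrr.
Qed.

Lemma integrable_itv_bounded (s t G : R) (g : R -> R) : s <= t ->
  measurable_fun [set` `[s, t]] g -> (forall u, s <= u <= t -> `|g u| <= G) ->
  mu.-integrable [set` `[s, t]] (EFin \o g).
Proof.
move=> st mg gG; apply: measurable_bounded_integrable => //.
  by rewrite -[X in (X < _)%E]/(mu [set` `[s, t]]) lebesgue_measure_itv_cc // ltry.
exists G; split; first by rewrite num_real.
move=> G' GG' u /=; rewrite in_itv /= => /gG/le_trans; apply; exact: ltW.
Qed.

Lemma Rintegral_itv_cst (s t k : R) : s <= t ->
  Rintegral mu [set` `[s, t]] (fun=> k) = k * (t - s).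
Proof.
move=> st; rewrite Rintegral_cst //.
by rewrite -[X in fine X]/(mu [set` `[s, t]]) lebesgue_measure_itv_cc.
Qed.

Lemma dist_Rintegral_itv_cst (g : R -> R) (s t k e : R) : s <= t ->
  mu.-integrable [set` `[s, t]] (EFin \o g) ->
  (forall u, s <= u <= t -> `|g u - k| <= e) ->
  `|Rintegral mu [set` `[s, t]] g - (t - s) * k| <= (t - s) * e.
Proof.
move=> st ig gke.
have int_cst v : mu.-integrable [set` `[s, t]] (EFin \o fun=> v).
  by apply: (integrable_itv_bounded (G := `|v|)) => //; exact: measurable_cst.
have I_ge : (k - e) * (t - s) <= Rintegral mu [set` `[s, t]] g.
  rewrite -Rintegral_itv_cst //; apply: le_Rintegral => //.
  by move=> u /=; rewrite in_itv /= => /gke; rewrite ler_norml; lra.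
have I_le : Rintegral mu [set` `[s, t]] g <= (k + e) * (t - s).
  rewrite -Rintegral_itv_cst //; apply: le_Rintegral => //.
  by move=> u /=; rewrite in_itv /= => /gke; rewrite ler_norml; lra.
rewrite ler_norml; apply/andP; split; nra.
Qed.

Lemma Rintegral_itv_eq_sub (F g B : R -> R) (p q : R) : p <= q ->
  measurable_fun [set` `[p, q]] g ->
  (forall s t, p <= s -> s <= t -> t <= q -> B s <= B t) ->
  (forall s u t, p <= s -> s <= u -> u <= t -> t <= q -> `|g u - g s| <= B t - B s) ->
  (forall s t, p <= s -> s < t -> t <= q ->
     `|F t - F s - (t - s) * g s| <= (t - s) * (B t - B s)) ->
  mu.-integrable [set` `[p, q]] (EFin \o g) /\
  Rintegral mu [set` `[p, q]] g = F q - F p.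
Proof.
move=> pq mg B_mono g_osc F_inc.
have int_g s t : p <= s -> s <= t -> t <= q -> mu.-integrable [set` `[s, t]] (EFin \o g).
  move=> ps st tq; apply: (integrable_itv_bounded (G := `|g p| + (B q - B p))) => //.
    by apply: measurable_funS mg => //; apply: subset_itv; rewrite bnd_simp.
  move=> u /andP[su ut]; have := ler_normD (g p) (g u - g p); rewrite addrC subrK.
  have := g_osc p u q (lexx p) (le_trans ps su) (le_trans ut tq) (lexx q); lra.
split; first exact: int_g.
have int_split s t : p <= s -> s <= t -> t <= q ->
    Rintegral mu [set` `[p, t]] g - Rintegral mu [set` `[p, s]] g =
    Rintegral mu [set` `[s, t]] g.
  move=> ps st tq.
  rewrite (@Rintegral_itvB R g (BLeft p) (BRight t) s) ?bnd_simp ?(le_trans ps st) //.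
    apply: Rintegral_itv_obnd_cbnd; apply: integrableS (int_g _ _ ps st tq) => //.
    by apply: subset_itv; rewrite bnd_simp.
  exact: int_g _ _ (lexx p) (le_trans ps st) tq.
pose D t := Rintegral mu [set` `[p, t]] g - F t.
suff : D q = D p by rewrite /D set_itv1 Rintegral_set1 => ?; lra.
apply: (eq_of_increment_le (B := fun t => 2 * B t)) => // [s t ps st tq|s t ps st tq].
  by rewrite ler_pM2l //; exact: B_mono.
have -> : D t - D s = (Rintegral mu [set` `[s, t]] g - (t - s) * g s)
    - (F t - F s - (t - s) * g s).
  by rewrite -int_split ?(ltW st) // /D; ring.
have osc_st u : s <= u <= t -> `|g u - g s| <= B t - B s.
  by move=> /andP[su ut]; exact: g_osc.
have := dist_Rintegral_itv_cst (ltW st) (int_g _ _ ps (ltW st) tq) osc_st.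
have := F_inc _ _ ps st tq; have := ler_normB
  (Rintegral mu [set` `[s, t]] g - (t - s) * g s) (F t - F s - (t - s) * g s).
rewrite !mulrBr; lra.
Qed.

Lemma Rintegral_eq_off_countable (D N : set R) (G H : R -> R) :
  measurable D -> countable N -> (forall t, D t -> ~ N t -> G t = H t) ->
  mu.-integrable D (EFin \o H) ->
  mu.-integrable D (EFin \o G) /\
  Rintegral mu D G = Rintegral mu D H.
Proof.
move=> mD cN GH iH.
have mH : measurable_fun D H by apply/measurable_EFinP; exact: measurable_int iH.
have mN : measurable N := countable_measurable (fun t => measurable_set1 t) cN.
have N0 : mu N = 0%E by exact: countable_lebesgue_measure0.
have GH_ae : ae_eq mu D (EFin \o G) (EFin \o H).
  exists N; split => //.
  move=> u /= /not_implyP[Du neq]; apply: contrapT => Nu; apply: neq.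
  by rewrite GH.
have mG : measurable_fun D G.
  have -> : D = (D `&` N) `|` (D `\` N).
    by apply/seteqP; split=> u; [case: (pselect (N u)) => Nu Du; [left|right]|case=> -[]].
  rewrite measurable_funU; [split|exact: measurableI|exact: measurableD].
    move=> _ Y mY; apply: (countable_measurable (fun t => measurable_set1 t)).
    by apply: sub_countable cN; apply: subset_card_le => u [[]].
  apply: (eq_measurable_fun H); first by move=> u /[!inE] -[Du Nu]; rewrite GH.
  by apply: measurable_funS mH => // u [].
split; last first.
  rewrite /Rintegral; congr fine; apply: ae_eq_integral => //; exact/measurable_EFinP.
apply/integrableP; split; first exact/measurable_EFinP.
apply: le_lt_trans (integrableP _ _ _ iH).2; rewrite le_eqVlt; apply/orP; left.
apply/eqP; apply: ae_eq_integral => //; last exact: ae_eq_abse.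
  by apply: measurableT_comp => //; exact/measurable_EFinP.
by apply: measurableT_comp => //; exact/measurable_EFinP.
Qed.
End IntervalIntegrals.

Section ConvexSlopes.
Context {R : realType} (phi : R -> R) (K : R).
Hypothesis phi_convex : forall s t u, s < t -> t < u ->
  phi t * (u - s) <= phi s * (u - t) + phi u * (t - s).
Hypothesis phi_lipschitz : forall s t, `|phi t - phi s| <= K * `|t - s|.

Definition slope s t := (phi t - phi s) / (t - s).

Lemma le_slope s t s' t' : s < t -> s' < t' -> s <= s' -> t <= t' ->
  slope s t <= slope s' t'.
Proof.
have slopeSr u v w : u < v -> v < w -> slope u v <= slope u w.
  move=> uv vw; have := phi_convex uv vw; rewrite /slope.
  rewrite ler_pdivrMr ?subr_gt0 // mulrAC ler_pdivlMr ?subr_gt0 ?(lt_trans uv) //.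
  nra.
have slopeSl u v w : u < v -> v < w -> slope u w <= slope v w.
  move=> uv vw; have := phi_convex uv vw; rewrite /slope.
  rewrite ler_pdivrMr ?subr_gt0 ?(lt_trans uv) // mulrAC ler_pdivlMr ?subr_gt0 //.
  nra.
move=> st st' ss' tt'; apply: (@le_trans _ _ (slope s t')).
  by move: tt'; rewrite le_eqVlt => /predU1P[<-|/(slopeSr _ _ _ st)].
by move: ss'; rewrite le_eqVlt => /predU1P[<-|/slopeSl]; last exact.
Qed.

Lemma norm_slope_le s t : s < t -> `|slope s t| <= K.
Proof. by move=> st; rewrite /slope normrM normfV ler_pdivrMr ?normr_gt0 ?subr_eq0 ?gt_eqF. Qed.

Definition right_deriv t := inf [set slope t u | u in [set u | t < u]].
Definition left_deriv t := sup [set slope s t | s in [set s | s < t]].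

Let right_slopes_neq0 t : [set slope t u | u in [set u | t < u]] !=set0.
Proof. by exists (slope t (t + 1)), (t + 1) => //=; rewrite ltrDl. Qed.

Let left_slopes_neq0 t : [set slope s t | s in [set s | s < t]] !=set0.
Proof. by exists (slope (t - 1) t), (t - 1) => //=; rewrite ltrBlDr ltrDl. Qed.

Lemma right_deriv_le_slope t u : t < u -> right_deriv t <= slope t u.
Proof.
move=> tu; apply: ge_inf; last by exists u.
have t1 : t - 1 < t by rewrite ltrBlDr ltrDl.
by exists (slope (t - 1) t) => _ [v /= tv <-]; apply: le_slope => //; exact: ltW.
Qed.

Lemma slope_le_left_deriv s t : s < t -> slope s t <= left_deriv t.
Proof.
move=> st; apply: ub_le_sup; last by exists s.
have t1 : t < t + 1 by rewrite ltrDl.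
by exists (slope t (t + 1)) => _ [v /= vt <-]; apply: le_slope => //; exact: ltW.
Qed.

Lemma right_deriv_ge t c : (forall u, t < u -> c <= slope t u) -> c <= right_deriv t.
Proof. by move=> H; apply: lb_le_inf => // _ [u /= tu <-]; exact: H. Qed.

Lemma left_deriv_le t c : (forall s, s < t -> slope s t <= c) -> left_deriv t <= c.
Proof. by move=> H; apply: ge_sup => // _ [s /= st <-]; exact: H. Qed.

Lemma left_deriv_le_right t : left_deriv t <= right_deriv t.
Proof.
apply: left_deriv_le => s st; apply: right_deriv_ge => u tu.
by apply: le_slope => //; exact: ltW.
Qed.

Lemma right_deriv_le_left s t : s < t -> right_deriv s <= left_deriv t.
Proof.
by move=> st; apply: le_trans (right_deriv_le_slope st) (slope_le_left_deriv st).
Qed.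

Lemma right_deriv_nondecreasing : {homo right_deriv : s t / s <= t}.
Proof.
move=> s t; rewrite le_eqVlt => /predU1P[->//|st].
exact: le_trans (right_deriv_le_left st) (left_deriv_le_right t).
Qed.

Lemma norm_right_deriv_le t : `|right_deriv t| <= K.
Proof.
have t1 : t < t + 1 by rewrite ltrDl.
rewrite ler_norml (le_trans (right_deriv_le_slope t1)); last first.
  by have := norm_slope_le t1; rewrite ler_norml => /andP[].
rewrite andbT; apply: right_deriv_ge => u tu.
by have := norm_slope_le tu; rewrite ler_norml => /andP[].
Qed.

Lemma subgradient_le t rho : left_deriv t <= rho -> rho <= right_deriv t ->
  forall u, phi t + rho * (u - t) <= phi u.
Proof.
move=> ld_rho rho_rd u; case: (ltgtP t u) => tu.
- have := le_trans rho_rd (right_deriv_le_slope tu).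
  rewrite /slope ler_pdivlMr ?subr_gt0 //; lra.
- have := le_trans (slope_le_left_deriv tu) ld_rho.
  rewrite /slope ler_pdivrMr ?subr_gt0 //; lra.
- by rewrite tu subrr mulr0 addr0.
Qed.

Lemma local_subgradient t c d : 0 < d ->
  (forall h, `|h| < d -> phi t + c * h <= phi (t + h)) ->
  left_deriv t <= c /\ c <= right_deriv t.
Proof.
move=> d_gt0 H; split.
  apply: left_deriv_le => s st.
  pose h := Num.min (t - s) (d / 2).
  have h_gt0 : 0 < h by rewrite lt_min subr_gt0 st divr_gt0.
  have hs : h <= t - s by rewrite ge_min lexx.
  have hd : h <= d / 2 by rewrite ge_min lexx orbT.
  have := H (- h); rewrite normrN gtr0_norm // => /(_ ltac:(lra)) Hh.
  have th : t - h < t by lra.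
  apply: (le_trans (@le_slope s t (t - h) t st th ltac:(lra) (lexx _))).
  rewrite /slope ler_pdivrMr; last by lra.
  have -> : t - (t - h) = h by ring.
  lra.
apply: right_deriv_ge => u tu.
pose h := Num.min (u - t) (d / 2).
have h_gt0 : 0 < h by rewrite lt_min subr_gt0 tu divr_gt0.
have hu : h <= u - t by rewrite ge_min lexx.
have hd : h <= d / 2 by rewrite ge_min lexx orbT.
have := H h; rewrite gtr0_norm // => /(_ ltac:(lra)) Hh.
have th : t < t + h by lra.
apply: (le_trans _ (@le_slope t (t + h) t u th tu (lexx _) ltac:(lra))).
rewrite /slope ler_pdivlMr; last by lra.
have -> : t + h - t = h by ring.
lra.
Qed.

Lemma derivable_left_deriv_eq t : left_deriv t = right_deriv t ->
  derivable phi t 1.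
Proof.
move=> ld_rd; apply/cvg_ex; exists (right_deriv t); apply/cvgrPdist_lt => e e_gt0.
have rd_lt : right_deriv t < right_deriv t + e by rewrite ltrDl.
have [_ [u /= tu <-] Hu] := inf_lt (right_slopes_neq0 t) rd_lt.
have [_ [s /= st <-] Hs] : exists2 v, [set slope s t | s in [set s | s < t]] v &
    left_deriv t - e < v.
  by apply: sup_gt => //; rewrite ltrBlDr ltrDl.
exists (Num.min (u - t) (t - s)) => /=; first by rewrite lt_min !subr_gt0 tu st.
move=> h /=; rewrite sub0r normrN lt_min => /andP[hu hs] h_neq0.
have -> : h^-1 *: ((phi \o shift t) (h *: (1:R)) - phi t) = (phi (t + h) - phi t) / h.
  have -> : h%:A = h :> R by rewrite /GRing.scale /= mulr1.
  by rewrite /comp /shift [h + t]addrC [RHS]mulrC.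
case: (ltgtP h 0) h_neq0 => // h0 _.
- have -> : (phi (t + h) - phi t) / h = slope (t + h) t.
    rewrite /slope; have -> : t - (t + h) = - h by ring.
    by rewrite invrN mulrN -mulNr opprB.
  have th : t + h < t by lra.
  have := slope_le_left_deriv th.
  have : slope s t <= slope (t + h) t.
    by apply: le_slope => //; move: hs; rewrite ltr0_norm //; lra.
  rewrite -ld_rd => sl_ld ss_sl.
  by rewrite ger0_norm ?subr_ge0 //; lra.
- have -> : (phi (t + h) - phi t) / h = slope t (t + h).
    by rewrite /slope; have -> : t + h - t = h by ring.
  have th : t < t + h by lra.
  have := right_deriv_le_slope th.
  have : slope t (t + h) <= slope t u.
    by apply: le_slope => //; move: hu; rewrite gtr0_norm //; lra.
  move=> sl_su rd_sl.
  by rewrite ler0_norm ?subr_le0 //; lra.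
Qed.

Lemma countable_kinks : countable [set t | left_deriv t < right_deriv t].
Proof.
(* A rational in ]left_deriv t, right_deriv t[ determines t, since these
   intervals are pairwise disjoint by right_deriv_le_left. *)
apply/countable_injP.
pose q t : rat := if pselect (left_deriv t < right_deriv t) is left H
  then projT1 (cid (rat_in_itvoo H)) else 0.
have qP t : left_deriv t < right_deriv t ->
    left_deriv t < ratr (q t) < right_deriv t.
  move=> H; rewrite /q; case: pselect => // H'.
  by case: cid => /= r; rewrite in_itv.
exists (fun t => choice.pickle (q t)) => s t /[!inE] Hs Ht /= Est.
have {}Est : q s = q t by exact: (pcan_inj choice.pickleK Est).
have := qP s Hs; have := qP t Ht; rewrite Est => /andP[a1 a2] /andP[b1 b2].
case: (ltgtP s t) => // st; have := right_deriv_le_left st; lra.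
Qed.

End ConvexSlopes.

Section LogIntegral.
Context {R : realType} (phi : R -> R) (K c : R).
Hypothesis phi_convex : forall s t u, s < t -> t < u ->
  phi t * (u - s) <= phi s * (u - t) + phi u * (t - s).
Hypothesis phi_lipschitz : forall s t, `|phi t - phi s| <= K * `|t - s|.
Hypothesis c_gt0 : 0 < c.
Hypothesis phi_ge : forall t, c <= phi t.
Local Notation rd := (right_deriv phi).

Let phi_gt0 t : 0 < phi t. Proof. exact: lt_le_trans c_gt0 (phi_ge t). Qed.

Let rdK t : `|rd t| <= K. Proof. exact: norm_right_deriv_le phi_convex phi_lipschitz t. Qed.

Let phi_lip s t : s <= t -> `|phi t - phi s| <= K * (t - s).
Proof. by move=> st; rewrite -[t - s]ger0_norm ?subr_ge0. Qed.

Lemma dist_right_deriv_div s t : s <= t ->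
  `|rd t / phi t - rd s / phi s| <= (rd t - rd s) / c + K * K * (t - s) / (c * c).
Proof. by move=> st; rewrite dist_div_le ?phi_lip ?right_deriv_nondecreasing. Qed.

Lemma dist_ln_sub_right_deriv s t : s < t ->
  `|ln (phi t) - ln (phi s) - (t - s) * (rd s / phi s)| <=
    (t - s) * ((rd t - rd s) / c + K * K * (t - s) / (c * c)).
Proof.
move=> st; set sl := slope phi s t; set beta := _ / c + _.
have rd_sl : rd s <= sl := right_deriv_le_slope phi_convex st.
have sl_beta : (sl - rd s) / c + K * K * (t - s) / (c * c) <= beta.
  rewrite lerD2r ler_pM2r ?invr_gt0 // lerD2r.
  exact: le_trans (slope_le_left_deriv phi_convex st) (left_deriv_le_right phi_convex t).
have d_phit : `|sl / phi t - rd s / phi s| <= beta.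
  exact: le_trans (dist_div_le c_gt0 (phi_ge s) (phi_ge t) rd_sl (rdK s)
    (phi_lip (ltW st))) sl_beta.
have d_phis : `|sl / phi s - rd s / phi s| <= beta.
  apply: le_trans (dist_div_le c_gt0 (phi_ge s) (phi_ge s) rd_sl (rdK s) _) sl_beta.
  by rewrite subrr normr0 mulr_ge0 ?subr_ge0 ?(ltW st) // (le_trans _ (rdK s)).
have dsl : phi t - phi s = (t - s) * sl.
  by rewrite /sl /slope mulrC divfK // subr_eq0 gt_eqF.
have L_bounds : (t - s) * (sl / phi t) <= ln (phi t) - ln (phi s) <= (t - s) * (sl / phi s).
  rewrite [_ * (sl / phi t)]mulrA [_ * (sl / phi s)]mulrA -dsl.
  exact: ln_sub_bounds.
move: L_bounds d_phit d_phis; rewrite !ler_norml; clear sl_beta.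
have : 0 < t - s by rewrite subr_gt0.
move: (sl / phi t) (sl / phi s) (rd s / phi s) (ln (phi t) - ln (phi s)) beta (t - s).
move=> a b z L e d; nra.
Qed.

Lemma Rintegral_right_deriv_div (p q : R) : p <= q ->
  (@lebesgue_measure R).-integrable [set` `[p, q]] (EFin \o (fun t => rd t / phi t)) /\
  Rintegral (@lebesgue_measure R) [set` `[p, q]] (fun t => rd t / phi t) =
    ln (phi q) - ln (phi p).
Proof.
move=> pq; pose B t := rd t / c + K * K * t / (c * c).
have dB s t : B t - B s = (rd t - rd s) / c + K * K * (t - s) / (c * c).
  by rewrite /B; field; rewrite gt_eqF.
have B_mono s t : s <= t -> B s <= B t.
  move=> st; rewrite -subr_ge0 dB; apply: addr_ge0; apply: divr_ge0.
  - by rewrite subr_ge0 right_deriv_nondecreasing.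
  - exact: ltW.
  - by rewrite mulr_ge0 ?subr_ge0 // -expr2 sqr_ge0.
  - by rewrite -expr2 sqr_ge0.
apply: (Rintegral_itv_eq_sub (F := fun t => ln (phi t)) (B := B)) => //.
- apply: measurable_funM.
    exact: nondecreasing_measurable (right_deriv_nondecreasing phi_convex).
  apply: measurable_funS (continuous_measurable_fun _) => // t.
  by apply: continuousV; [rewrite gt_eqF|exact: lipschitz_continuous].
- by move=> s t _ st _; exact: B_mono.
- move=> s u t _ su ut _; apply: le_trans (lerB (B_mono _ _ ut) (lexx (B s))).
  by rewrite dB; exact: dist_right_deriv_div.
- by move=> s t _ st _; rewrite dB; exact: dist_ln_sub_right_deriv.
Qed.

End LogIntegral.

Section NormAlongLine.
Context {R : realType} {E : normedModType R} (x y : E).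

Definition nxy (t : R) := `|x + t *: y|.

Lemma nxy_convex s t u : s < t -> t < u ->
  nxy t * (u - s) <= nxy s * (u - t) + nxy u * (t - s).
Proof.
move=> st tu.
have us : 0 < u - s by rewrite subr_gt0 (lt_trans st).
have ut : 0 < u - t by rewrite subr_gt0.
have ts : 0 < t - s by rewrite subr_gt0.
have comb : (u - s) *: (x + t *: y) = (u - t) *: (x + s *: y) + (t - s) *: (x + u *: y).
  rewrite !scalerDr !scalerA addrACA -!scalerDl; congr (_ *: _ + _ *: _); ring.
rewrite /nxy -{1}(gtr0_norm us) mulrC -normrZ comb.
apply: le_trans (ler_normD _ _) _.
by rewrite !normrZ !gtr0_norm // [_ * (u - t)]mulrC [_ * (t - s)]mulrC.
Qed.

Lemma nxy_lipschitz s t : `|nxy t - nxy s| <= `|y| * `|t - s|.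
Proof.
apply: le_trans (ler_dist_dist _ _) _.
have -> : x + t *: y - (x + s *: y) = (t - s) *: y.
  by rewrite scalerBl opprD addrACA subrr add0r.
by rewrite normrZ mulrC.
Qed.

Hypothesis xy_free : forall a b : R, a *: x + b *: y = 0 -> a = 0 /\ b = 0.

Lemma nxy_gt0 t : 0 < nxy t.
Proof.
rewrite /nxy normr_gt0; apply/eqP => xty0.
by have := @xy_free 1 t; rewrite scale1r => /(_ xty0) [/eqP]; rewrite oner_eq0.
Qed.

Lemma exists_nxy_min : exists t0, forall u, nxy t0 <= nxy u.
Proof.
have y_gt0 : 0 < `|y|.
  rewrite normr_gt0; apply/eqP => y0.
  by have := @xy_free 0 1; rewrite scale0r add0r scale1r => /(_ y0) [_ /eqP]; rewrite oner_eq0.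
(* Outside [-L, L] the norm exceeds |x| = nxy 0, so the minimum on [-L, L] is global. *)
pose L := (2 * `|x| + 1) / `|y|.
have yL : L * `|y| = 2 * `|x| + 1 by rewrite /L divfK // gt_eqF.
have L_gt0 : 0 < L by rewrite divr_gt0 //; have := normr_ge0 x; lra.
have [c _ c_min] := @EVT_min R nxy (- L) L ltac:(lra)
  (continuous_subspaceT (lipschitz_continuous nxy_lipschitz)).
exists c => u; have [uI|uI] := boolP (u \in `[- L, L]); first exact: c_min.
have zeroI : 0 \in `[- L, L] by rewrite in_itv /=; apply/andP; split; lra.
apply: le_trans (c_min _ zeroI) _.
have Lu : L < `|u|.
  move: uI; rewrite in_itv /= negb_and -!ltNge => /orP[] uL.
    by rewrite ltr0_norm; lra.
  by rewrite gtr0_norm; lra.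
have nxy_lb : `|u| * `|y| - `|x| <= nxy u.
  rewrite lerBlDr /nxy -normrZ.
  rewrite {1}(_ : u *: y = (x + u *: y) - x) ?ler_normB //.
  by rewrite addrC addKr.
have : L * `|y| < `|u| * `|y| by rewrite ltr_pM2r.
rewrite /nxy scale0r addr0 in nxy_lb *; have := normr_ge0 x; lra.
Qed.

End NormAlongLine.

Lemma norm_scale_add_min_pos {R : realType} {E : normedModType R} (v e : E) :
  (forall s : R, 0 < s -> `|v + e| <= `|s *: v + e|) ->
  forall s : R, `|v + e| <= `|s *: v + e|.
Proof.
move=> min_pos s; have [s_gt0|s_le0] := ltP 0 s; first exact: min_pos.
(* v / 2 + e is a convex combination of s v + e and v + e with weight l <= 1/2. *)
pose l : R := (2 * (1 - s))^-1.
have l_gt0 : 0 < l by rewrite invr_gt0; lra.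
have l_le : l <= 2^-1 by rewrite lef_pV2 ?posrE; lra.
have comb : (2^-1 : R) *: v + e = l *: (s *: v + e) + (1 - l) *: (v + e).
  rewrite !scalerDr !scalerA addrACA -!scalerDl -{1}(scale1r e).
  by congr (_ *: _ + _ *: _); rewrite /l; field; lra.
have := min_pos 2^-1; rewrite invr_gt0 ltr0n comb => /(_ isT) /le_trans.
move=> /(_ _ (ler_normD _ _)); rewrite !normrZ !gtr0_norm; [|lra|lra] => ineq.
by rewrite -(ler_pM2l l_gt0); lra.
Qed.

Section Orthogonality.
Context {R : realType} {E : normedModType R} (x y : E).
Local Notation phi := (nxy x y).
Let phi_convex := @nxy_convex R E x y.

Lemma bj_orth_yP a : bj_orth (x + a *: y) y <-> forall u, phi a <= phi u.
Proof.
split=> [orth u|phi_min b].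
  by have := orth (u - a); rewrite /nxy -addrA -scalerDl addrCA subrr addr0.
by have := phi_min (a + b); rewrite /nxy scalerDl addrA.
Qed.

Lemma bj_orth_of_subgradient t rho :
  left_deriv phi t <= rho -> rho <= right_deriv phi t -> rho != 0 ->
  bj_orth (x + t *: y) (x - (phi t / rho - t) *: y).
Proof.
move=> ld_rho rho_rd rho_neq0.
set b := phi t / rho - t; set d := phi t / rho.
have sub := subgradient_le phi_convex ld_rho rho_rd.
have xty : x + t *: y = (x - b *: y) + d *: y.
  rewrite -addrA; congr (x + _); rewrite -scaleNr -scalerDl; congr (_ *: _).
  by rewrite /b /d; ring.
move=> beta; rewrite xty.
have -> : x - b *: y + d *: y + beta *: (x - b *: y) = (1 + beta) *: (x - b *: y) + d *: y.
  by rewrite scalerDl scale1r addrAC.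
apply: norm_scale_add_min_pos => s s_gt0.
have -> : s *: (x - b *: y) + d *: y = s *: (x + ((d - s * b) / s) *: y).
  rewrite !scalerDr scalerA -scaleNr scalerA -addrA; congr (_ + _).
  by rewrite -scalerDl; congr (_ *: _); field; rewrite gt_eqF.
rewrite normrZ gtr0_norm // -xty -[X in X <= _]/(phi t).
have := sub ((d - s * b) / s).
have -> : rho * ((d - s * b) / s - t) = (1 - s) * phi t / s.
  by rewrite /b /d; field; rewrite gt_eqF.
rewrite -(ler_pM2l s_gt0); have -> : s * (phi t + (1 - s) * phi t / s) = phi t.
  by field; rewrite gt_eqF.
by [].
Qed.

Hypothesis xy_free : forall a b : R, a *: x + b *: y = 0 -> a = 0 /\ b = 0.

Lemma subgradient_of_bj_orth t b : bj_orth (x + t *: y) (x - b *: y) ->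
  t + b != 0 /\ left_deriv phi t <= phi t / (t + b) /\ phi t / (t + b) <= right_deriv phi t.
Proof.
move=> orth; set d := t + b.
have orth_vec beta : x + t *: y + beta *: (x - b *: y) = (1 + beta) *: x + (t - beta * b) *: y.
  by rewrite scalerBr scalerA scalerDl scale1r scalerBl addrACA.
have d_neq0 : d != 0.
  apply/eqP => d0; have := orth (-1); rewrite orth_vec.
  have -> : t - -1 * b = d by rewrite /d; ring.
  rewrite d0 scale0r addr0 addrN scale0r normr0.
  by have := nxy_gt0 xy_free t; rewrite /nxy; lra.
split=> //; apply: (local_subgradient phi_convex (d := `|d|)); first by rewrite normr_gt0.
(* Testing orthogonality against beta = d / (d + h) - 1 yields the local support line. *)
move=> h hd.
have hh : h * h < d * d.
  by rewrite -!expr2 -(ger0_norm (sqr_ge0 h)) -(ger0_norm (sqr_ge0 d)) !normrX ltrXn2r.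
have dh_gt0 : 0 < d * (d + h) by nra.
have dh_neq0 : d + h != 0 by apply/eqP => dh0; move: dh_gt0; rewrite dh0 mulr0 ltxx.
set s := d / (d + h).
have s_gt0 : 0 < s.
  have -> : s = d * (d + h) / ((d + h) * (d + h)) by rewrite /s; field.
  by rewrite divr_gt0 // -expr2 exprn_even_gt0.
have := orth (s - 1); rewrite orth_vec.
have -> : (1 + (s - 1)) *: x + (t - (s - 1) * b) *: y = s *: (x + (t + h) *: y).
  rewrite scalerDr scalerA; congr (_ *: _ + _ *: _); first by ring.
  by rewrite /s /d; field; rewrite -/d.
rewrite normrZ gtr0_norm // -/(phi t) -/(phi (t + h)) => ineq.
have : phi t / s <= phi (t + h) by rewrite ler_pdivrMr // mulrC.
have -> // : phi t / s = phi t + phi t / d * h.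
by rewrite /s; field; rewrite d_neq0 dh_neq0.
Qed.

End Orthogonality.

Section FunctionF.
Context {R : realType} {E : normedModType R} (x y : E) (m M : R).
Hypothesis xy_free : forall a b : R, a *: x + b *: y = 0 -> a = 0 /\ b = 0.
Hypothesis orth_y_itv : [set a : R | bj_orth (x + a *: y) y] = [set` `[m, M]].
Local Notation phi := (nxy x y).
Let phi_convex := @nxy_convex R E x y.

Lemma fxy_eq t : left_deriv phi t = right_deriv phi t -> ~ (m <= t <= M) ->
  t + fxy x y m M t = phi t / right_deriv phi t.
Proof.
move=> ld_rd t_out.
have rd_neq0 : right_deriv phi t != 0.
  apply/eqP => rd0; apply: t_out.
  have : [set a : R | bj_orth (x + a *: y) y] t.
    apply/bj_orth_yP => u; rewrite -[phi t]addr0 -(mul0r (u - t)).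
    by apply: (subgradient_le phi_convex); rewrite ?ld_rd rd0.
  by rewrite orth_y_itv /= in_itv.
rewrite /fxy asboolT; last by split=> //; exact: derivable_left_deriv_eq ld_rd.
set S := [set b : R | bj_orth (x + t *: y) (x - b *: y)].
have S_b0 : S (phi t / right_deriv phi t - t).
  by apply: bj_orth_of_subgradient => //; rewrite ld_rd.
(* Whatever b is chosen by xget, differentiability pins phi t / (t + b) down. *)
have := xgetPex 0 (ex_intro _ _ S_b0); set b := xget 0 S => S_b.
have [tb_neq0 [ld_le le_rd]] := subgradient_of_bj_orth xy_free S_b.
have <- : phi t / (t + b) = right_deriv phi t.
  by apply/eqP; rewrite eq_le le_rd -ld_rd ld_le.
by field; rewrite tb_neq0 gt_eqF // nxy_gt0.
Qed.

Lemma Rintegral_inv_fxy p q : p <= q -> (forall t, p < t < q -> ~ (m <= t <= M)) ->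
  (@lebesgue_measure R).-integrable [set` `[p, q]]
    (fun t => ((t + fxy x y m M t)^-1)%:E) /\
  Rintegral (@lebesgue_measure R) [set` `[p, q]] (fun t => (t + fxy x y m M t)^-1) =
    ln (phi q) - ln (phi p).
Proof.
move=> pq pq_out; have [t0 t0_min] := exists_nxy_min xy_free.
have [int_rd <-] := Rintegral_right_deriv_div phi_convex (@nxy_lipschitz _ _ x y)
  (nxy_gt0 xy_free t0) t0_min pq.
have N_countable := countableU (countable_kinks phi_convex)
  (countableU (countable1 p) (countable1 q)).
apply: (Rintegral_eq_off_countable (measurable_itv _) N_countable _ int_rd).
move=> t /=; rewrite in_itv /= => /andP[pt tq] t_ok.
have /pq_out t_out : p < t < q.
  by rewrite !lt_neqAle pt tq !andbT; apply/andP; split; apply/eqP => ?; apply: t_ok; auto.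
have ld_rd : left_deriv phi t = right_deriv phi t.
  apply/eqP; rewrite eq_le left_deriv_le_right // leNgt; apply/negP => kink.
  by apply: t_ok; left.
by rewrite fxy_eq // invf_div.
Qed.

End FunctionF.

Theorem lemma4 (R : realType) (E : completeNormedModType R) (x y : E) (m M : R) :
  (forall a b : R, a *: x + b *: y = 0 -> a = 0 /\ b = 0) ->
  [set a : R | bj_orth (x + a *: y) y] = [set` `[m, M]] ->
  (forall a : R, M < a ->
     (@lebesgue_measure R).-integrable [set` `[M, a]]
        (fun t => ((t + fxy x y m M t)^-1)%:E) /\
     `|x + a *: y| = `|x + M *: y| *
        expR (Rintegral (@lebesgue_measure R) [set` `[M, a]]
                (fun t => (t + fxy x y m M t)^-1))) /\
  (forall a : R, a < m ->
     (@lebesgue_measure R).-integrable [set` `[a, m]]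
        (fun t => ((t + fxy x y m M t)^-1)%:E) /\
     `|x + a *: y| = `|x + m *: y| *
        expR (- Rintegral (@lebesgue_measure R) [set` `[a, m]]
                (fun t => (t + fxy x y m M t)^-1))).
Proof.
move=> xy_free orth_y_itv.
have exp_ln_ratio (p q : R) : nxy x y q = nxy x y p * expR (ln (nxy x y q) - ln (nxy x y p)).
  by rewrite expRB !lnK ?posrE ?nxy_gt0 // mulrC divfK // gt_eqF // nxy_gt0.
split=> a a_lt.
- have right_out t : M < t < a -> ~ (m <= t <= M).
    by move=> /andP[Mt _] /andP[_ tM]; move: Mt; rewrite ltNge tM.
  have [int_f ->] := Rintegral_inv_fxy xy_free orth_y_itv (ltW a_lt) right_out.
  by split=> //; exact: exp_ln_ratio.
- have left_out t : a < t < m -> ~ (m <= t <= M).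
    by move=> /andP[_ tm] /andP[mt _]; move: tm; rewrite ltNge mt.
  have [int_f ->] := Rintegral_inv_fxy xy_free orth_y_itv (ltW a_lt) left_out.
  by split=> //; rewrite opprB; exact: exp_ln_ratio.
Qed.
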